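(* Let $n \ge 1$ and let $N$ be a $\lambda$-term satisfying $N a_1 a_2 \ldots a_n =_\beta a_1 a_2 \ldots a_n (N a_1 a_2 \ldots a_n)$ (for variables $a_1,\ldots,a_n$ not free in $N$). Then $N\,I^{\,n-1}$ (i.e. $N$ applied to $n-1$ copies of $I$) is a fixed point combinator.
   Context: Untyped $\lambda$-calculus; $=_\beta$ is $\beta$-convertibility; $I = \lambda x.x$. A term $Y$ is a fixed point combinator if $Yx =_\beta x(Yx)$ for a variable $x$ not free in $Y$. $N\,I^{m}$ denotes the left-associated application $N I \cdots I$ with $m$ copies of $I$. *)

From Stdlib Require Import Arith List Relations.
Import ListNotations.

(* A free variable is a de Bruijn index that is not bound; at binder depth d,
   [Var (d + k)] denotes the free variable number k. *)
Inductive term : Type :=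
| Var : nat -> term
| App : term -> term -> term
| Lam : term -> term.

Fixpoint lift (k c : nat) (t : term) : term :=
  match t with
  | Var i => if i <? c then Var i else Var (i + k)
  | App a b => App (lift k c a) (lift k c b)
  | Lam a => Lam (lift k (S c) a)
  end.

Fixpoint subst (t : term) (j : nat) (u : term) : term :=
  match t with
  | Var i => if i <? j then Var i
             else if i =? j then lift j 0 u
             else Var (i - 1)
  | App a b => App (subst a j u) (subst b j u)
  | Lam a => Lam (subst a (S j) u)
  end.

Inductive beta : term -> term -> Prop :=
| beta_redex : forall M N, beta (App (Lam M) N) (subst M 0 N)
| beta_appl : forall M M' N, beta M M' -> beta (App M N) (App M' N)
| beta_appr : forall M N N', beta N N' -> beta (App M N) (App M N')
| beta_lam : forall M M', beta M M' -> beta (Lam M) (Lam M').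

Definition beta_conv : term -> term -> Prop := clos_refl_sym_trans term beta.

Fixpoint free (x : nat) (t : term) : Prop :=
  match t with
  | Var i => i = x
  | App a b => free x a \/ free x b
  | Lam a => free (S x) a
  end.

Definition I : term := Lam (Var 0).

Definition apps (t : term) (us : list term) : term := fold_left App us t.

Definition fpc (Y : term) : Prop :=
  forall x : nat, ~ free x Y -> beta_conv (App Y (Var x)) (App (Var x) (App Y (Var x))).

(* Substituting I for a_1, ..., a_{n-1} and a variable y for a_n in the
   defining conversion of N (legitimate because beta-conversion is closed
   under simultaneous substitution and the a_i are not free in N) gives
   N I^{n-1} y =_beta I^{n-1} y (N I^{n-1} y) when n >= 2, resp.
   N y =_beta y (N y) when n = 1; the leading identities vanish since
   I ... I u =_beta u. *)
From Stdlib Require Import Arith List Relations Lia.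
Import ListNotations.

Lemma beta_conv_map (f : term -> term) :
  (forall t t', beta t t' -> beta (f t) (f t')) ->
  forall t t', beta_conv t t' -> beta_conv (f t) (f t').
Proof.
  intros Hf t t' H; induction H.
  - apply rst_step, Hf; assumption.
  - apply rst_refl.
  - apply rst_sym; assumption.
  - eapply rst_trans; eassumption.
Qed.

Lemma beta_conv_appl (t t' u : term) :
  beta_conv t t' -> beta_conv (App t u) (App t' u).
Proof. apply (beta_conv_map (fun t => App t u)); intros; apply beta_appl; assumption. Qed.

Lemma beta_conv_apps (us : list term) (t t' : term) :
  beta_conv t t' -> beta_conv (apps t us) (apps t' us).
Proof.
  revert t t'; induction us as [|u us IH]; intros t t' H; [exact H|].
  apply IH, beta_conv_appl, H.
Qed.

Lemma apps_app_single (t : term) (us : list term) (v : term) :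
  apps t (us ++ [v]) = App (apps t us) v.
Proof. unfold apps; apply fold_left_app. Qed.

Lemma lift_0 (t : term) (c : nat) : lift 0 c t = t.
Proof.
  revert c; induction t as [i|a IHa b IHb|a IHa]; intros c; simpl.
  - destruct (i <? c); rewrite ?Nat.add_0_r; reflexivity.
  - rewrite IHa, IHb; reflexivity.
  - rewrite IHa; reflexivity.
Qed.

Lemma lift_lift (t : term) (k d c c' : nat) :
  c' <= c -> c <= c' + d -> lift k c (lift d c' t) = lift (d + k) c' t.
Proof.
  revert k d c c'; induction t as [i|a IHa b IHb|a IHa]; intros k d c c' H1 H2; simpl.
  - destruct (Nat.ltb_spec i c'); simpl.
    + destruct (Nat.ltb_spec i c); [reflexivity|lia].
    + destruct (Nat.ltb_spec (i + d) c); [lia|]. f_equal; lia.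
  - rewrite IHa, IHb; auto.
  - rewrite IHa; auto; lia.
Qed.

Lemma subst_lift (t : term) (m c j : nat) (v : term) :
  c <= j -> j <= c + m -> subst (lift (S m) c t) j v = lift m c t.
Proof.
  revert m c j; induction t as [i|a IHa b IHb|a IHa]; intros m c j H1 H2; simpl.
  - destruct (Nat.ltb_spec i c); simpl.
    + destruct (Nat.ltb_spec i j); [reflexivity|lia].
    + destruct (Nat.ltb_spec (i + S m) j); [lia|].
      destruct (Nat.eqb_spec (i + S m) j); [lia|]. f_equal; lia.
  - rewrite IHa, IHb; auto.
  - rewrite IHa; auto; lia.
Qed.

(* Simultaneous substitution of [s k] for the free variable [k], under [d]
   binders: free variable [k] appears there as [Var (d + k)]. *)
Fixpoint psubst (d : nat) (s : nat -> term) (t : term) : term :=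
  match t with
  | Var i => if i <? d then Var i else lift d 0 (s (i - d))
  | App a b => App (psubst d s a) (psubst d s b)
  | Lam a => Lam (psubst (S d) s a)
  end.

Lemma psubst_var (s : nat -> term) (i : nat) : psubst 0 s (Var i) = s i.
Proof. simpl; rewrite Nat.sub_0_r; apply lift_0. Qed.

Lemma psubst_apps (d : nat) (s : nat -> term) (t : term) (us : list term) :
  psubst d s (apps t us) = apps (psubst d s t) (map (psubst d s) us).
Proof.
  revert t; induction us as [|u us IH]; intros t; [reflexivity|].
  apply IH.
Qed.

Lemma lift_psubst (t : term) (s : nat -> term) (k c d : nat) :
  c <= d -> lift k c (psubst d s t) = psubst (d + k) s (lift k c t).
Proof.
  revert k c d; induction t as [i|a IHa b IHb|a IHa]; intros k c d H; simpl.
  - destruct (Nat.ltb_spec i d); simpl.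
    + destruct (Nat.ltb_spec i c); simpl.
      * destruct (Nat.ltb_spec i (d + k)); [reflexivity|lia].
      * destruct (Nat.ltb_spec (i + k) (d + k)); [reflexivity|lia].
    + destruct (Nat.ltb_spec i c); [lia|]. simpl.
      destruct (Nat.ltb_spec (i + k) (d + k)); [lia|].
      rewrite lift_lift by lia. do 2 f_equal. lia.
  - rewrite IHa, IHb; auto.
  - rewrite IHa by lia. reflexivity.
Qed.

Lemma subst_psubst (M : term) (s : nat -> term) (N : term) (k d : nat) :
  subst (psubst (S (k + d)) s M) k (psubst d s N) = psubst (k + d) s (subst M k N).
Proof.
  revert k; induction M as [i|a IHa b IHb|a IHa]; intros k; simpl.
  - destruct (Nat.ltb_spec i (S (k + d))); simpl.
    + destruct (Nat.ltb_spec i k); simpl.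
      * destruct (Nat.ltb_spec i (k + d)); [reflexivity|lia].
      * destruct (Nat.eqb_spec i k).
        -- rewrite (lift_psubst N s k 0 d) by lia. f_equal; lia.
        -- simpl. destruct (Nat.ltb_spec (i - 1) (k + d)); [reflexivity|lia].
    + rewrite subst_lift by lia.
      destruct (Nat.ltb_spec i k); [lia|].
      destruct (Nat.eqb_spec i k); [lia|]. simpl.
      destruct (Nat.ltb_spec (i - 1) (k + d)); [lia|]. do 2 f_equal; lia.
  - rewrite IHa, IHb; reflexivity.
  - f_equal. exact (IHa (S k)).
Qed.

Lemma beta_psubst (t t' : term) :
  beta t t' -> forall d s, beta (psubst d s t) (psubst d s t').
Proof.
  induction 1 as [M N| | |]; intros d s; simpl.
  - pose proof (subst_psubst M s N 0 d) as E; simpl in E.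
    rewrite <- E; apply beta_redex.
  - apply beta_appl; auto.
  - apply beta_appr; auto.
  - apply beta_lam; auto.
Qed.

Lemma beta_conv_psubst (s : nat -> term) (t t' : term) :
  beta_conv t t' -> beta_conv (psubst 0 s t) (psubst 0 s t').
Proof. apply beta_conv_map; intros; apply beta_psubst; assumption. Qed.

Lemma psubst_fresh (t : term) (d : nat) (s : nat -> term) :
  (forall i, d <= i -> free i t -> s (i - d) = Var (i - d)) -> psubst d s t = t.
Proof.
  revert d; induction t as [i|a IHa b IHb|a IHa]; intros d H; simpl.
  - destruct (Nat.ltb_spec i d); [reflexivity|].
    rewrite H by (simpl; auto). simpl. f_equal. lia.
  - rewrite IHa, IHb; auto; intros i Hi Hf; apply H; simpl; auto.
  - rewrite IHa; [reflexivity|]. intros i Hi Hf.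
    replace (i - S d) with (i - 1 - d) by lia.
    apply H; [lia|]. simpl. replace (S (i - 1)) with i by lia. exact Hf.
Qed.

Fixpoint assign (xs : list nat) (ts : list term) (a : nat) : term :=
  match xs, ts with
  | x :: xs', t :: ts' => if a =? x then t else assign xs' ts' a
  | _, _ => Var a
  end.

Lemma assign_notin (xs : list nat) (ts : list term) (a : nat) :
  ~ In a xs -> assign xs ts a = Var a.
Proof.
  revert ts; induction xs as [|x xs IH]; intros ts H; [reflexivity|].
  destruct ts as [|t ts]; [reflexivity|]. simpl.
  destruct (Nat.eqb_spec a x) as [->|]; [exfalso; apply H; left; reflexivity|].
  apply IH; intro; apply H; right; assumption.
Qed.

Lemma map_assign (xs : list nat) (ts : list term) :
  NoDup xs -> length xs = length ts -> map (assign xs ts) xs = ts.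
Proof.
  revert ts; induction xs as [|x xs IH]; intros [|t ts] Hd Hl;
    simpl in *; try discriminate; [reflexivity|].
  inversion Hd as [|? ? Hx Hd']; subst.
  rewrite Nat.eqb_refl. f_equal.
  transitivity (map (assign xs ts) xs); [|apply IH; auto].
  apply map_ext_in. intros a Ha.
  destruct (Nat.eqb_spec a x) as [->|]; [contradiction|reflexivity].
Qed.

Section Instantiation.

Variables (N : term) (xs : list nat) (ts : list term).
Hypotheses (Hdistinct : NoDup xs) (Hlen : length xs = length ts)
  (Hfresh : forall a, In a xs -> ~ free a N).

Lemma psubst_assign_vars : map (psubst 0 (assign xs ts)) (map Var xs) = ts.
Proof.
  rewrite map_map; transitivity (map (assign xs ts) xs).
  - apply map_ext; intro; apply psubst_var.
  - apply map_assign; assumption.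
Qed.

Lemma psubst_assign_apps : psubst 0 (assign xs ts) (apps N (map Var xs)) = apps N ts.
Proof.
  rewrite psubst_apps, psubst_assign_vars, psubst_fresh; [reflexivity|].
  intros i _ Hf; rewrite Nat.sub_0_r.
  apply assign_notin; intro Hi; exact (Hfresh i Hi Hf).
Qed.

End Instantiation.

Lemma psubst_assign_head (x : nat) (rest : list nat) (t : term) (us : list term) :
  NoDup (x :: rest) -> length (x :: rest) = length (t :: us) ->
  psubst 0 (assign (x :: rest) (t :: us)) (apps (Var x) (map Var rest)) = apps t us.
Proof.
  intros Hd Hl.
  pose proof (psubst_assign_vars _ _ Hd Hl) as E.
  pose proof (f_equal (hd t) E) as Ehead; pose proof (f_equal (@tl term) E) as Etail.
  cbn [hd tl map] in Ehead, Etail.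
  rewrite psubst_apps, Etail, Ehead; reflexivity.
Qed.

Lemma beta_conv_instantiate (N : term) (x : nat) (rest : list nat) (t : term) (us : list term) :
  NoDup (x :: rest) -> length (x :: rest) = length (t :: us) ->
  (forall a, In a (x :: rest) -> ~ free a N) ->
  beta_conv (apps N (map Var (x :: rest)))
            (App (apps (Var x) (map Var rest)) (apps N (map Var (x :: rest)))) ->
  beta_conv (apps N (t :: us)) (App (apps t us) (apps N (t :: us))).
Proof.
  intros Hd Hl Hf H.
  apply (beta_conv_psubst (assign (x :: rest) (t :: us))) in H; cbn [psubst] in H.
  rewrite !psubst_assign_apps, psubst_assign_head in H by assumption.
  exact H.
Qed.

Lemma apps_I_repeat (k : nat) (u : term) : beta_conv (apps I (repeat I k ++ [u])) u.
Proof.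
  revert u; induction k as [|k IH]; intros u; simpl.
  - rewrite <- (lift_0 u 0) at 2. apply rst_step, (beta_redex (Var 0)).
  - eapply rst_trans; [|apply IH].
    apply beta_conv_apps, rst_step, (beta_redex (Var 0)).
Qed.

Theorem proposition5p1 (n : nat) (N : term) (x : nat) (rest : list nat)
  (hn : 1 <= n) (hlen : length (x :: rest) = n)
  (hdistinct : NoDup (x :: rest))
  (hfresh : forall a, In a (x :: rest) -> ~ free a N)
  (hN : beta_conv (apps N (map Var (x :: rest)))
                  (apps (Var x) (map Var rest ++ [apps N (map Var (x :: rest))]))) :
  fpc (apps N (repeat I (n - 1))).
Proof.
  intros y _.
  rewrite apps_app_single in hN.
  destruct (n - 1) as [|k] eqn:Hk.
  - exact (beta_conv_instantiate N x rest (Var y) [] hdistinct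
             ltac:(simpl in *; lia) hfresh hN).
  - pose proof (beta_conv_instantiate N x rest I (repeat I k ++ [Var y]) hdistinct
                  ltac:(simpl in *; rewrite length_app, repeat_length; simpl; lia)
                  hfresh hN) as H.
    change (apps N (I :: repeat I k ++ [Var y]))
      with (apps N (repeat I (S k) ++ [Var y])) in H.
    rewrite apps_app_single in H.
    eapply rst_trans; [exact H|].
    apply beta_conv_appl, apps_I_repeat.
Qed.
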